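(* Let $h(x)=f(x)-f(x^* )$. Consider one step of the mini-batch block-coordinate Frank–Wolfe iteration described in the context with an arbitrary fixed step size $\gamma\in[0,1]$ (or its line-search variant): $x^{(k+1)}=x^{(k)}+\gamma\sum_{i\in S}(s_{[i]}-x^{(k)}_{[i]})$, where $S\subseteq[n]$ with $|S|=\tau$ is uniformly random, and the block points $s_{(i)}\in\mathcal{M}_i$ satisfy $\mathbb{E}\big[\langle s_{(S)},\nabla_{(S)}f(x^{(k)})\rangle-\min_{s'\in\mathcal{M}^{(S)}}\langle s',\nabla_{(S)}f(x^{(k)})\rangle\big]\le\frac{\delta\gamma C_f^\tau}{2}$ for some $\delta\ge0$. Then $$\mathbb{E}\,h(x^{(k+1)})\le\Big(1-\frac{\gamma\tau}{n}\Big)\mathbb{E}\,h(x^{(k)})+\frac{\gamma^2(1+\delta)}{2}C_f^{\tau},$$ where the expectation is over all randomness up to iteration $k+1$.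
   Context: Let $\mathcal{M}=\mathcal{M}_1\times\cdots\times\mathcal{M}_n$, each $\mathcal{M}_i\subset\mathbb{R}^{m_i}$ nonempty compact convex, $f:\mathbb{R}^m\to\mathbb{R}$ convex and differentiable, $x^*$ a minimizer of $f$ over $\mathcal{M}$, $x^{(k)}\in\mathcal{M}$. Notation: for $S\subseteq[n]$, $x_{(S)}$ is the subvector of blocks in $S$, $\mathcal{M}^{(S)}=\prod_{i\in S}\mathcal{M}_i$, $\nabla_{(S)}f$ the partial gradient, $s_{[S]}$ is $s_{(S)}$ padded with zeros outside $S$, $s_{(S)}=\prod_{i\in S}s_{(i)}$. Set curvature $C_f^{(S)}=\sup\frac{2}{\gamma^2}\big(f(y)-f(x)-\langle y_{(S)}-x_{(S)},\nabla_{(S)}f(x)\rangle\big)$ over $x\in\mathcal{M}$, $s_{(S)}\in\mathcal{M}^{(S)}$, $\gamma\in(0,1]$, $y=x+\gamma(s_{[S]}-x_{[S]})$; $C_f^\tau=\binom{n}{\tau}^{-1}\sum_{|S|=\tau}C_f^{(S)}$. The line-search variant replaces $x^{(k+1)}$ by $x^{(k)}+\sum_{i\in S}\gamma_i(s_{[i]}-x^{(k)}_{[i]})$ with blockwise line-search steps whenever this has smaller objective value than the fixed-step update. *)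

From HB Require Import structures.
From mathcomp Require Import all_boot all_order all_algebra.
From mathcomp Require Import all_classical all_reals all_analysis.
Set Implicit Arguments. Unset Strict Implicit. Unset Printing Implicit Defensive.
Import Order.TTheory GRing.Theory Num.Theory.
Import numFieldNormedType.Exports.
Local Open Scope classical_set_scope.
Local Open Scope ring_scope.

(* The ambient space R^m is 'rV[R]_m; coordinate j belongs to block blk j.
   A block vector s_(i) in R^{m_i} is represented by its zero-padding s_[i]. *)
Section Defs.
Context {R : realType} {n m : nat} (blk : 'I_m -> 'I_n).

Definition restrict (S : {set 'I_n}) (v : 'rV[R]_m) : 'rV[R]_m :=
  \row_j (if blk j \in S then v 0 j else 0).

Definition block_supported (i : 'I_n) : set 'rV[R]_m :=
  [set v | forall j, blk j != i -> v 0 j = 0].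

Definition cvx_set (A : set 'rV[R]_m) : Prop :=
  forall x y (t : R), A x -> A y -> 0 <= t <= 1 -> A (t *: x + (1 - t) *: y).

Definition convex_fun (f : 'rV[R]_m -> R) : Prop :=
  forall x y (t : R), 0 <= t <= 1 ->
    f (t *: x + (1 - t) *: y) <= t * f x + (1 - t) * f y.

Definition domain (Mi : 'I_n -> set 'rV[R]_m) : set 'rV[R]_m :=
  [set x | forall i, Mi i (restrict [set i] x)].

(* M^(S) = prod_{i in S} M_i, as padded vectors s_[S] *)
Definition block_prod (Mi : 'I_n -> set 'rV[R]_m) (S : {set 'I_n}) : set 'rV[R]_m :=
  [set v | exists vi : 'I_n -> 'rV[R]_m,
     (forall i, i \in S -> Mi i (vi i)) /\ v = \sum_(i in S) vi i].

(* <y_(S) - x_(S), grad_(S) f(x)> is the differential of f at x applied to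
   the padded vector (y - x)_[S] *)
Definition curv_S (f : 'rV[R]_m -> R) (Mi : 'I_n -> set 'rV[R]_m)
  (S : {set 'I_n}) : \bar R :=
  ereal_sup [set z | exists x s (g : R), domain Mi x /\ block_prod Mi S s /\
     0 < g <= 1 /\
     z = (2 / g ^+ 2 * (f (x + g *: (s - restrict S x)) - f x
           - 'd f x (restrict S ((x + g *: (s - restrict S x)) - x))))%:E].

Definition curv_tau (f : 'rV[R]_m -> R) (Mi : 'I_n -> set 'rV[R]_m)
  (tau : nat) : \bar R :=
  (('C(n, tau)%:R)^-1 : R)%:E * (\sum_(S : {set 'I_n} | #|S| == tau) curv_S f Mi S)%E.

(* expectation over a uniformly random S with |S| = tau *)
Definition avgS (tau : nat) (g : {set 'I_n} -> R) : R :=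
  ('C(n, tau)%:R)^-1 * \sum_(S : {set 'I_n} | #|S| == tau) g S.

Definition lin_min (f : 'rV[R]_m -> R) (Mi : 'I_n -> set 'rV[R]_m)
  (x : 'rV[R]_m) (S : {set 'I_n}) : R :=
  inf [set 'd f x v | v in block_prod Mi S].

Definition oracle_gap (f : 'rV[R]_m -> R) (Mi : 'I_n -> set 'rV[R]_m)
  (x : 'rV[R]_m) (S : {set 'I_n}) (s : 'I_n -> 'rV[R]_m) : R :=
  'd f x (\sum_(i in S) s i) - lin_min f Mi x S.

Definition fw_step (x : 'rV[R]_m) (s : 'I_n -> 'rV[R]_m) (S : {set 'I_n})
  (gamma : R) : 'rV[R]_m :=
  x + gamma *: \sum_(i in S) (s i - restrict [set i] x).

Definition ls_step (x : 'rV[R]_m) (s : 'I_n -> 'rV[R]_m) (S : {set 'I_n})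
  (gs : 'I_n -> R) : 'rV[R]_m :=
  x + \sum_(i in S) gs i *: (s i - restrict [set i] x).

End Defs.

From Pilot Require Import Defs.
From HB Require Import structures.
From mathcomp Require Import all_boot all_order all_algebra.
From mathcomp Require Import all_classical all_reals all_analysis.
From mathcomp Require Import measurable_realfun ring lra.
Set Implicit Arguments. Unset Strict Implicit. Unset Printing Implicit Defensive.
Import Order.TTheory GRing.Theory Num.Theory.
Import numFieldNormedType.Exports.
Local Open Scope ring_scope.

(** For a fixed outcome and a fixed block set S, the definition of
  the curvature C_f^(S) bounds f(x + γ d) by the linear model
  f(x) + γ <d, ∇f(x)> + γ^2/2 C_f^(S), where d = s_[S] - x_[S]; the
  line-search step can only do better. Comparing s_(S) with the feasible point
  x*_(S) turns <d, ∇f(x)> into the oracle gap plus <x*_[S] - x_[S], ∇f(x)>.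
  Averaging over the uniformly random S, every block is chosen with
  probability τ/n, so the last term averages to τ/n <x* - x, ∇f(x)>, which
  convexity bounds by -τ/n h(x). Integrating over the remaining randomness and
  inserting the assumed bound on the expected gap gives the claim. *)

Lemma convex_diff_ge (R : realType) (m : nat) (f : 'rV[R]_m -> R) (x y : 'rV[R]_m) :
  convex_fun f -> differentiable f x -> 'd f x (y - x) <= f y - f x.
Proof.
move=> cvx_f df; rewrite -deriveE //.
have der := @diff_derivable _ _ _ f x (y - x) df.
rewrite /derive cvg_at_rightE; last exact: der.
apply: limr_le.
  move: der; rewrite /derivable => /cvg_ex [l hl]; apply/cvg_ex; exists l.
  move=> A /hl /nbhs_ballP [_ /posnumP[e] xe_A].
  by exists e%:num => //= z xe_z /gt_eqF/negbT/xe_A; exact.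
near=> h.
have h0 : 0 < h by near: h; exact: nbhs_right_gt.
have h1 : h <= 1 by near: h; apply: nbhs_right_le; exact: ltr01.
have := cvx_f y x h; rewrite h1 ltW // => /(_ isT) cvx_h.
rewrite /= /shift.
have -> : h *: (y - x) + x = h *: y + (1 - h) *: x.
  by rewrite scalerBr scalerBl scale1r -addrA [- _ + x]addrC.
rewrite -[f y - f x](mulKf (lt0r_neq0 h0)) /GRing.scale /= ler_pM2l ?invr_gt0 //.
rewrite lerBlDr; apply: (le_trans cvx_h); rewrite mulrBl mul1r mulrBr; lra.
Unshelve. all: by end_near. Qed.

Lemma card_draws_containing (n tau : nat) (k : 'I_n) : (0 < tau)%N ->
  #|[set S : {set 'I_n} | (#|S| == tau) && (k \in S)]| = 'C(n.-1, tau.-1).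
Proof.
move=> tau_gt0.
have notin_sub (A : {set 'I_n}) : A \subset [set~ k] -> k \notin A.
  by move=> sA; apply/negP => /(fintype.subsetP sA); rewrite !inE eqxx.
have -> : [set S : {set 'I_n} | (#|S| == tau) && (k \in S)] =
    (fun A => k |: A) @: [set A : {set 'I_n} | (A \subset [set~ k]) && (#|A| == tau.-1)].
  apply/setP => S; rewrite inE; apply/idP/imsetP.
    case/andP => /eqP cardS kS; exists (S :\ k); last by rewrite finset.setD1K.
    rewrite inE -cardS (cardsD1 k S) kS eqxx andbT.
    by apply/fintype.subsetP => z; rewrite !inE => /andP[].
  move=> [A]; rewrite inE => /andP[/notin_sub kA /eqP cardA] ->.
  by rewrite finset.setU11 andbT cardsU1 kA cardA add1n prednK.
rewrite card_in_imset; first by rewrite cards_draws cardsC1 card_ord.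
move=> A B; rewrite !inE => /andP[/notin_sub kA _] /andP[/notin_sub kB _] eqAB.
by rewrite -(finset.setU1K kA) -(finset.setU1K kB) eqAB.
Qed.

Local Open Scope classical_set_scope.

Section BlockRestriction.
Variables (R : realType) (n m : nat) (blk : 'I_m -> 'I_n).
Local Notation restrict := (Defs.restrict blk).
Implicit Types S : {set 'I_n}.

Lemma restrictD S (u v : 'rV[R]_m) : restrict S (u + v) = restrict S u + restrict S v.
Proof. by apply/rowP => j; rewrite !mxE; case: ifP; rewrite ?mxE ?addr0. Qed.

Lemma restrictZ S (a : R) (v : 'rV[R]_m) : restrict S (a *: v) = a *: restrict S v.
Proof. by apply/rowP => j; rewrite !mxE; case: ifP; rewrite ?mxE ?mulr0. Qed.

Lemma restrictB S (u v : 'rV[R]_m) : restrict S (u - v) = restrict S u - restrict S v.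
Proof. by rewrite restrictD -scaleN1r restrictZ scaleN1r. Qed.

Lemma restrict_id S (v : 'rV[R]_m) : restrict S (restrict S v) = restrict S v.
Proof. by apply/rowP => j; rewrite !mxE; case: (blk j \in S). Qed.

Lemma sum_restrict1 S (v : 'rV[R]_m) : \sum_(i in S) restrict [set i] v = restrict S v.
Proof.
apply/rowP => j; rewrite summxE !mxE.
have [jS|jNS] := boolP (blk j \in S).
  rewrite (bigD1 (blk j)) //= !mxE inE eqxx big1 ?addr0 // => i /andP[_ ne].
  by rewrite !mxE inE eq_sym (negbTE ne).
rewrite big1 // => i iS; rewrite !mxE inE.
by case: eqP => // eq_ji; rewrite eq_ji iS in jNS.
Qed.

Lemma sum_restrict_draws tau (v : 'rV[R]_m) : (0 < tau)%N ->
  \sum_(S : {set 'I_n} | #|S| == tau) restrict S v = 'C(n.-1, tau.-1)%:R *: v.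
Proof.
move=> tau_gt0; apply/rowP => j; rewrite summxE !mxE.
under eq_bigr do rewrite mxE.
rewrite -big_mkcondr /=.
rewrite (eq_bigl [in [set S : {set 'I_n} | (#|S| == tau) && (blk j \in S)]%SET]);
  last by move=> S; rewrite inE.
by rewrite sumr_const card_draws_containing // mulr_natl.
Qed.

Variable Mi : 'I_n -> set 'rV[R]_m.

Lemma block_prod_restrict S x : domain blk Mi x -> block_prod Mi S (restrict S x).
Proof. by move=> dom_x; exists (fun i => restrict [set i] x); rewrite sum_restrict1. Qed.

Lemma restrict_block_prod S v : (forall i, Mi i `<=` block_supported blk i) ->
  block_prod Mi S v -> restrict S v = v.
Proof.
move=> supp [vi [Mvi ->]]; apply/rowP => j; rewrite mxE; case: ifP => // jNS.
rewrite summxE big1 // => i iS; apply: (supp i _ (Mvi i iS)).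
by apply: contraFneq jNS => ->.
Qed.

End BlockRestriction.

Section Averages.
Variables (R : realType) (n tau : nat).
Implicit Types g : {set 'I_n} -> R.

Lemma avgS_cst (c : R) : (tau <= n)%N -> avgS tau (fun _ : {set 'I_n} => c) = c.
Proof.
move=> tau_le_n; rewrite /avgS.
rewrite (eq_bigl [in [set S : {set 'I_n} | #|S| == tau]%SET]); last by move=> S; rewrite inE.
rewrite sumr_const card_draws card_ord -[c *+ _]mulr_natl mulrA mulVf ?mul1r //.
by rewrite pnatr_eq0 -lt0n bin_gt0.
Qed.

Lemma avgSD g1 g2 : avgS tau (fun S => g1 S + g2 S) = avgS tau g1 + avgS tau g2.
Proof. by rewrite /avgS big_split mulrDr. Qed.

Lemma avgSZ (k : R) g : avgS tau (fun S => k * g S) = k * avgS tau g.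
Proof. by rewrite /avgS -mulr_sumr mulrCA. Qed.

Lemma ler_avgS g1 g2 :
  (forall S : {set 'I_n}, #|S| = tau -> g1 S <= g2 S) -> avgS tau g1 <= avgS tau g2.
Proof.
move=> le_g; rewrite /avgS ler_wpM2l ?invr_ge0 //.
by apply: ler_sum => S /eqP; exact: le_g.
Qed.

Lemma avgS_ge0 g : (forall S : {set 'I_n}, #|S| = tau -> 0 <= g S) -> 0 <= avgS tau g.
Proof.
move=> g_ge0; rewrite /avgS mulr_ge0 ?invr_ge0 //.
by apply: sumr_ge0 => S /eqP; exact: g_ge0.
Qed.

Lemma avgS_linear_restrict (m : nat) (blk : 'I_m -> 'I_n)
    (L : {linear 'rV[R]_m -> R}) (v : 'rV[R]_m) : (0 < tau <= n)%N ->
  avgS tau (fun S => L (Defs.restrict blk S v)) = tau%:R / n%:R * L v.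
Proof.
case/andP => tau_gt0 tau_le_n.
rewrite /avgS -(raddf_sum L) sum_restrict_draws // [X in _ * X]linearZ /=.
rewrite /GRing.scale /= mulrA.
congr (_ * _); have n_gt0 : (0 < n)%N := leq_trans tau_gt0 tau_le_n.
have C_neq0 : 'C(n, tau)%:R != 0 :> R by rewrite pnatr_eq0 -lt0n bin_gt0.
have n_neq0 : n%:R != 0 :> R by rewrite pnatr_eq0 -lt0n.
have := mul_bin_diag n tau.-1; rewrite prednK // => binE.
apply: (mulfI n_neq0); rewrite mulrCA -natrM binE natrM; field.
by rewrite C_neq0 n_neq0.
Qed.

Lemma measurable_avgS (d : measure_display) (T : measurableType d)
    (g : T -> {set 'I_n} -> R) :
  (forall S : {set 'I_n}, #|S| = tau -> measurable_fun setT (g^~ S)) ->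
  measurable_fun setT (fun w => avgS tau (g w)).
Proof.
move=> mg; rewrite /avgS.
under eq_fun do rewrite big_mkcond /=.
apply: measurable_funM; first exact: measurable_cst.
apply: measurable_sum => S; case: eqP => [/mg //|_]; exact: measurable_cst.
Qed.

End Averages.

Section LinearMinimization.
Variables (R : realType) (n m : nat) (Mi : 'I_n -> set 'rV[R]_m).
Hypothesis Mi_compact : forall i, compact (Mi i).
Implicit Types S : {set 'I_n}.

Lemma block_prod_linear_bounded_below (L : {linear 'rV[R]_m -> R}) S :
  continuous L -> exists lb, forall v, block_prod Mi S v -> lb <= L v.
Proof.
move=> cL.
have bounded_block i : exists M : R, forall v, Mi i v -> `|L v| <= M.
  have /compact_bounded[M [_ hM]] : compact (L @` Mi i).
    exact: continuous_compact (continuous_subspaceT cL) (@Mi_compact i).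
  by exists (M + 1) => v Mv; apply: (hM _ _ _ (imageP _ Mv)); rewrite ltrDl.
have [M hM] := choice bounded_block.
exists (- \sum_(i in S) M i) => _ [vi [Mvi ->]].
rewrite -sumrN raddf_sum; apply: ler_sum => i iS.
by rewrite lerNl (le_trans _ (hM i _ (Mvi i iS))) // -normrN ler_norm.
Qed.

Variables (f : 'rV[R]_m -> R) (x : 'rV[R]_m).
Hypothesis df : differentiable f x.

Lemma lin_min_le S v : block_prod Mi S v -> lin_min f Mi x S <= 'd f x v.
Proof.
move=> Mv; have [lb hlb] := block_prod_linear_bounded_below S (diff_continuous df).
by apply: ge_inf; [exists lb => _ [u Mu <-]; exact: hlb | exists v].
Qed.

Lemma oracle_gap_ge0 S (s : 'I_n -> 'rV[R]_m) :
  (forall i, i \in S -> Mi i (s i)) -> 0 <= oracle_gap f Mi x S s.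
Proof. by move=> Ms; rewrite subr_ge0 lin_min_le //; exists s. Qed.

End LinearMinimization.

Section Curvature.
Variables (R : realType) (n m : nat) (blk : 'I_m -> 'I_n).
Variables (Mi : 'I_n -> set 'rV[R]_m) (f : 'rV[R]_m -> R).
Hypothesis Mi_supp : forall i, Mi i `<=` block_supported blk i.
Local Notation restrict := (Defs.restrict blk).
Implicit Types S : {set 'I_n}.

Lemma curv_S_ub S x v (g : R) :
  domain blk Mi x -> block_prod Mi S v -> 0 < g <= 1 ->
  ((2 / g ^+ 2 * (f (x + g *: (v - restrict S x)) - f x
     - 'd f x (g *: (v - restrict S x))))%:E <= curv_S blk f Mi S)%E.
Proof.
move=> dom_x Mv g01; apply: ereal_sup_ubound; exists x, v, g; do 3!split => //.
rewrite [x + _ - x]addrAC subrr add0r restrictZ restrictB restrict_id.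
by rewrite (restrict_block_prod Mi_supp Mv).
Qed.

Lemma curv_S_ge0 S x : domain blk Mi x -> (0 <= curv_S blk f Mi S)%E.
Proof.
move=> dom_x; have := curv_S_ub dom_x (block_prod_restrict S dom_x) (g := 1).
by rewrite subrr scaler0 addr0 linear0 !subr0 subrr mulr0; apply; rewrite ltr01 lexx.
Qed.

Lemma curv_tau_cases tau x : domain blk Mi x ->
  curv_tau blk f Mi tau = +oo%E \/
  exists c : {set 'I_n} -> R, (forall S : {set 'I_n}, #|S| = tau ->
      0 <= c S /\ curv_S blk f Mi S = (c S)%:E) /\
    curv_tau blk f Mi tau = (avgS tau c)%:E.
Proof.
move=> dom_x.
have [fin|] := pselect (forall S : {set 'I_n}, #|S| == tau -> (curv_S blk f Mi S < +oo)%E).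
  have curvE S : #|S| == tau -> curv_S blk f Mi S = (fine (curv_S blk f Mi S))%:E.
    by move=> cardS; rewrite fineK // ge0_fin_numE ?fin // (curv_S_ge0 _ dom_x).
  right; exists (fun S => fine (curv_S blk f Mi S)); split.
    by move=> S /eqP cardS; rewrite -curvE // fine_ge0 // (curv_S_ge0 _ dom_x).
  rewrite /curv_tau /avgS EFinM -sumEFin; congr (_ * _)%E.
  by apply: eq_bigr => S /curvE.
move=> /existsNP[S /not_implyP[cardS]]; rewrite ltey => /negP/negbNE/eqP curvSE.
left; rewrite /curv_tau (bigD1 S) //= curvSE addye; last first.
  by rewrite gt_eqF // (lt_le_trans ltNy0) // sume_ge0 // => *; exact: (curv_S_ge0 _ dom_x).
rewrite muleC gt0_mulye // lte_fin invr_gt0 ltr0n bin_gt0 -(eqP cardS).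
by rewrite -[X in (_ <= X)%N]card_ord max_card.
Qed.

End Curvature.

Section FrankWolfeStep.
Variables (R : realType) (n m : nat) (blk : 'I_m -> 'I_n).
Variables (Mi : 'I_n -> set 'rV[R]_m) (f : 'rV[R]_m -> R).
Hypothesis Mi_compact : forall i, compact (Mi i).
Hypothesis Mi_supp : forall i, Mi i `<=` block_supported blk i.
Local Notation restrict := (Defs.restrict blk).
Variables (x xstar : 'rV[R]_m) (S : {set 'I_n}) (s : 'I_n -> 'rV[R]_m) (gamma : R).
Hypothesis dom_x : domain blk Mi x.
Hypothesis dom_xstar : domain blk Mi xstar.
Hypothesis Ms : forall i, i \in S -> Mi i (s i).
Hypothesis gamma01 : 0 <= gamma <= 1.
Hypothesis df : differentiable f x.

Let sS := \sum_(i in S) s i.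

Lemma fw_stepE : fw_step blk x s S gamma = x + gamma *: (sS - restrict S x).
Proof. by rewrite /fw_step sumrB sum_restrict1. Qed.

Lemma fw_step_le_curv (c : R) : (0 < gamma -> (curv_S blk f Mi S <= c%:E)%E) ->
  f (fw_step blk x s S gamma) <= f x + gamma * 'd f x (sS - restrict S x) + gamma ^+ 2 / 2 * c.
Proof.
move=> curv_le; rewrite fw_stepE.
have [->|gamma_neq0] := eqVneq gamma 0.
  by rewrite scale0r addr0 !mul0r expr0n /= !mul0r !addr0.
have gamma_gt0 : 0 < gamma by rewrite lt0r gamma_neq0; case/andP: gamma01.
have gamma_in : 0 < gamma <= 1 by rewrite gamma_gt0; case/andP: gamma01.
have Mss : block_prod Mi S sS by exists s.
have := le_trans (curv_S_ub f Mi_supp dom_x Mss gamma_in) (curv_le gamma_gt0).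
rewrite lee_fin linearZ /=.
set rem := f _ - f x - _ => curv_rem.
have rem_le : rem <= gamma ^+ 2 / 2 * c.
  have -> : rem = gamma ^+ 2 / 2 * (2 / gamma ^+ 2 * rem) by field.
  by rewrite ler_wpM2l // divr_ge0 // exprn_ge0 // ltW.
move: rem_le; rewrite /rem /GRing.scale /=; lra.
Qed.

Lemma fw_direction_le :
  'd f x (sS - restrict S x) <= oracle_gap f Mi x S s + 'd f x (restrict S (xstar - x)).
Proof.
rewrite /oracle_gap restrictB !linearB /= -/sS.
have := lin_min_le Mi_compact df (block_prod_restrict S dom_xstar); lra.
Qed.

Lemma next_iterate_le (c : R) xn : (0 < gamma -> (curv_S blk f Mi S <= c%:E)%E) ->
  f xn <= f (fw_step blk x s S gamma) ->
  f xn - f xstar <= (f x - f xstar) + gamma * oracle_gap f Mi x S s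
     + gamma * 'd f x (restrict S (xstar - x)) + gamma ^+ 2 / 2 * c.
Proof.
move=> curv_le fxn; have := fw_step_le_curv curv_le.
have := ler_wpM2l (proj1 (andP gamma01)) fw_direction_le; lra.
Qed.

End FrankWolfeStep.

Lemma avg_next_iterate_le (R : realType) (n m : nat) (blk : 'I_m -> 'I_n)
    (Mi : 'I_n -> set 'rV[R]_m) (f : 'rV[R]_m -> R) (x xstar : 'rV[R]_m)
    (s : {set 'I_n} -> 'I_n -> 'rV[R]_m) (xn : {set 'I_n} -> 'rV[R]_m)
    (c : {set 'I_n} -> R) (tau : nat) (gamma : R) :
  (forall i, compact (Mi i)) -> (forall i, Mi i `<=` block_supported blk i) ->
  convex_fun f -> differentiable f x ->
  domain blk Mi x -> domain blk Mi xstar -> (0 < tau <= n)%N -> 0 <= gamma <= 1 ->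
  (forall (S : {set 'I_n}) i, #|S| = tau -> i \in S -> Mi i (s S i)) ->
  (forall S : {set 'I_n}, #|S| = tau -> 0 < gamma -> (curv_S blk f Mi S <= (c S)%:E)%E) ->
  (forall S : {set 'I_n}, #|S| = tau -> f (xn S) <= f (fw_step blk x (s S) S gamma)) ->
  avgS tau (fun S => f (xn S) - f xstar) <=
    (1 - gamma * tau%:R / n%:R) * (f x - f xstar)
    + gamma * avgS tau (fun S => oracle_gap f Mi x S (s S)) + gamma ^+ 2 / 2 * avgS tau c.
Proof.
move=> Mi_compact Mi_supp cvx_f df dom_x dom_xstar tau_range gamma01 Ms curv_le xn_le.
have step_le := ler_avgS (fun S cardS => next_iterate_le Mi_compact Mi_supp dom_x dom_xstar
  (Ms S ^~ cardS) gamma01 df (curv_le S cardS) (xn_le S cardS)).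
have /andP[_ tau_le_n] := tau_range.
rewrite !avgSD !avgSZ !avgS_cst // avgS_linear_restrict // in step_le.
rewrite avgSD avgS_cst //.
have gamma_tau_ge0 : 0 <= gamma * (tau%:R / n%:R).
  by rewrite mulr_ge0 ?divr_ge0 //; case/andP: gamma01.
have := ler_wpM2l gamma_tau_ge0 (convex_diff_ge xstar cvx_f df).
move: step_le; nra.
Qed.

Section Integrals.
Variables (R : realType) (d : measure_display) (T : measurableType d).

Lemma le_integral_ge0_majorant (mu : {measure set T -> \bar R}) (F G : T -> \bar R) :
  measurable_fun setT F -> measurable_fun setT G ->
  (forall w, 0 <= G w)%E -> (forall w, F w <= G w)%E ->
  (\int[mu]_w F w <= \int[mu]_w G w)%E.
Proof.
move=> mF mG G_ge0 FG; rewrite integralE.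
apply: (@le_trans _ _ (\int[mu]_w F^\+ w))%E.
  by rewrite geeDl // oppe_le0 integral_ge0 // => w _; exact: funeneg_ge0.
apply: ge0_le_integral => //; first exact: measurable_funepos.
by move=> w _; rewrite funeposE ge_max FG G_ge0.
Qed.

Lemma integral_affine_ge0 (P : probability T R) (H G : T -> R) (b g K : R) :
  measurable_fun setT H -> measurable_fun setT G ->
  (forall w, 0 <= H w) -> (forall w, 0 <= G w) -> 0 <= b -> 0 <= g -> 0 <= K ->
  (\int[P]_w ((b * H w)%:E + (g * G w)%:E + K%:E)
     = b%:E * \int[P]_w (H w)%:E + g%:E * \int[P]_w (G w)%:E + K%:E)%E.
Proof.
move=> mH mG H_ge0 G_ge0 b_ge0 g_ge0 K_ge0.
have mbH : measurable_fun setT (fun w => (b * H w)%:E).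
  exact/measurable_EFinP/measurable_funM.
have mgG : measurable_fun setT (fun w => (g * G w)%:E).
  exact/measurable_EFinP/measurable_funM.
have bH_ge0 w : setT w -> (0 <= (b * H w)%:E)%E by rewrite lee_fin mulr_ge0.
have gG_ge0 w : setT w -> (0 <= (g * G w)%:E)%E by rewrite lee_fin mulr_ge0.
have sum_ge0 w : setT w -> (0 <= (b * H w)%:E + (g * G w)%:E)%E.
  by rewrite -EFinD lee_fin addr_ge0 // mulr_ge0.
rewrite ge0_integralD //; last exact: emeasurable_funD.
rewrite ge0_integralD //.
under eq_integral do rewrite EFinM.
rewrite ge0_integralZl //; last 2 first.
- exact/measurable_EFinP.
- by move=> w _; rewrite lee_fin.
under [X in (_ + X + _)%E]eq_integral do rewrite EFinM.
rewrite ge0_integralZl //; last 2 first.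
- exact/measurable_EFinP.
- by move=> w _; rewrite lee_fin.
rewrite integral_cst // -[X in (_ = _ + X)%E]mule1.
by congr (_ + _ * _)%E; exact: probability_setT.
Qed.

End Integrals.

Lemma contraction_factor_ge0 (R : realType) (n tau : nat) (gamma : R) :
  (0 < tau <= n)%N -> 0 <= gamma <= 1 -> 0 <= 1 - gamma * tau%:R / n%:R.
Proof.
case/andP=> tau_gt0 tau_le_n /andP[gamma_ge0 gamma_le1].
have n_gt0 : 0 < n%:R :> R by rewrite ltr0n (leq_trans tau_gt0).
by rewrite subr_ge0 -mulrA mulr_ile1 ?divr_ge0 // ler_pdivrMr // mul1r ler_nat.
Qed.

Lemma expected_next_le (R : realType) (n m : nat) (blk : 'I_m -> 'I_n)
    (Mi : 'I_n -> set 'rV[R]_m) (f : 'rV[R]_m -> R) (xstar : 'rV[R]_m)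
    (d : measure_display) (T : measurableType d) (P : probability T R)
    (xk : T -> 'rV[R]_m) (s : T -> {set 'I_n} -> 'I_n -> 'rV[R]_m)
    (xnext : T -> {set 'I_n} -> 'rV[R]_m) (tau : nat) (gamma : R)
    (c : {set 'I_n} -> R) :
  (forall i, compact (Mi i)) -> (forall i, Mi i `<=` block_supported blk i) ->
  convex_fun f -> (forall x, differentiable f x) ->
  domain blk Mi xstar -> (forall y, domain blk Mi y -> f xstar <= f y) ->
  (0 < tau <= n)%N -> 0 <= gamma <= 1 -> (forall w, domain blk Mi (xk w)) ->
  (forall w (S : {set 'I_n}) i, #|S| = tau -> i \in S -> Mi i (s w S i)) ->
  (forall w (S : {set 'I_n}), #|S| = tau ->
     f (xnext w S) <= f (fw_step blk (xk w) (s w S) S gamma)) ->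
  measurable_fun setT (fun w => f (xk w)) ->
  (forall S : {set 'I_n}, #|S| = tau -> measurable_fun setT (fun w => f (xnext w S))) ->
  (forall S : {set 'I_n}, #|S| = tau ->
     measurable_fun setT (fun w => oracle_gap f Mi (xk w) S (s w S))) ->
  (forall S : {set 'I_n}, #|S| = tau -> 0 <= c S) ->
  (forall S : {set 'I_n}, #|S| = tau -> 0 < gamma -> (curv_S blk f Mi S <= (c S)%:E)%E) ->
  (\int[P]_w (avgS tau (fun S => f (xnext w S) - f xstar))%:E
     <= (1 - gamma * tau%:R / n%:R)%:E * \int[P]_w (f (xk w) - f xstar)%:E
        + gamma%:E * \int[P]_w (avgS tau (fun S => oracle_gap f Mi (xk w) S (s w S)))%:E
        + (gamma ^+ 2 / 2 * avgS tau c)%:E)%E.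
Proof.
move=> Mi_compact Mi_supp cvx_f df dom_xstar xstar_min tau_range gamma01 dom_xk Ms
  xnext_le mfxk mfxnext mgap c_ge0 curv_le.
have /andP[gamma_ge0 _] := gamma01.
have b_ge0 := contraction_factor_ge0 tau_range gamma01.
have h_ge0 w : 0 <= f (xk w) - f xstar by rewrite subr_ge0 xstar_min.
have gap_ge0 w : 0 <= avgS tau (fun S => oracle_gap f Mi (xk w) S (s w S)).
  by apply: avgS_ge0 => S cardS; apply: oracle_gap_ge0 => // i; exact: Ms.
have K_ge0 : 0 <= gamma ^+ 2 / 2 * avgS tau c.
  by apply: mulr_ge0; [rewrite divr_ge0 ?exprn_ge0 | exact: avgS_ge0].
rewrite -integral_affine_ge0 //; last 2 first.
- exact: measurable_funB.
- by apply: measurable_avgS.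
apply: le_integral_ge0_majorant => //.
- apply/measurable_EFinP/measurable_avgS => S cardS.
  exact: measurable_funB (mfxnext S cardS) (measurable_cst _).
- apply: emeasurable_funD; first apply: emeasurable_funD.
  + exact/measurable_EFinP/measurable_funM/measurable_funB.
  + exact/measurable_EFinP/measurable_funM/measurable_avgS.
  + exact: measurable_cst.
- move=> w; rewrite -!EFinD lee_fin.
  by apply: addr_ge0 K_ge0; apply: addr_ge0; exact: mulr_ge0.
move=> w; rewrite -!EFinD lee_fin.
exact: avg_next_iterate_le (Ms w) curv_le (xnext_le w).
Qed.

Theorem lemma2 (R : realType) (n m : nat) (blk : 'I_m -> 'I_n)
  (Mi : 'I_n -> set 'rV[R]_m) (f : 'rV[R]_m -> R) (xstar : 'rV[R]_m)
  (d : measure_display) (T : measurableType d) (P : probability T R)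
  (xk : T -> 'rV[R]_m) (s : T -> {set 'I_n} -> 'I_n -> 'rV[R]_m)
  (xnext : T -> {set 'I_n} -> 'rV[R]_m)
  (tau : nat) (gamma delta : R) :
  (forall i, Mi i !=set0) ->
  (forall i, compact (Mi i)) ->
  (forall i, cvx_set (Mi i)) ->
  (forall i, Mi i `<=` block_supported blk i) ->
  convex_fun f ->
  (forall x, differentiable f x) ->
  domain blk Mi xstar ->
  (forall y, domain blk Mi y -> f xstar <= f y) ->
  (0 < tau <= n)%N ->
  0 <= gamma <= 1 ->
  0 <= delta ->
  (forall w, domain blk Mi (xk w)) ->
  (forall w (S : {set 'I_n}) i, #|S| = tau -> i \in S -> Mi i (s w S i)) ->
  (forall w (S : {set 'I_n}), #|S| = tau ->
     xnext w S = fw_step blk (xk w) (s w S) S gamma \/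
     exists gs : 'I_n -> R, (forall i, 0 <= gs i <= 1) /\
       xnext w S = ls_step blk (xk w) (s w S) S gs /\
       f (xnext w S) <= f (fw_step blk (xk w) (s w S) S gamma)) ->
  measurable_fun setT (fun w => f (xk w)) ->
  (forall S : {set 'I_n}, #|S| = tau ->
     measurable_fun setT (fun w => f (xnext w S))) ->
  (forall S : {set 'I_n}, #|S| = tau ->
     measurable_fun setT (fun w => oracle_gap f Mi (xk w) S (s w S))) ->
  (\int[P]_w (avgS tau (fun S => oracle_gap f Mi (xk w) S (s w S)))%:E
     <= (delta * gamma / 2)%:E * curv_tau blk f Mi tau)%E ->
  (\int[P]_w (avgS tau (fun S => f (xnext w S) - f xstar))%:E
     <= (1 - gamma * tau%:R / n%:R)%:E * \int[P]_w (f (xk w) - f xstar)%:E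
        + (gamma ^+ 2 * (1 + delta) / 2)%:E * curv_tau blk f Mi tau)%E.
Proof.
move=> _ Mi_compact _ Mi_supp cvx_f df dom_xstar xstar_min tau_range gamma01 delta_ge0
  dom_xk Ms step mfxk mfxnext mgap gap_bound.
have xnext_le w (S : {set 'I_n}) :
    #|S| = tau -> f (xnext w S) <= f (fw_step blk (xk w) (s w S) S gamma).
  by move=> /(step w S)[->|[gs [_ [_ ->]]]].
have expected_le := expected_next_le P Mi_compact Mi_supp cvx_f df dom_xstar xstar_min
  tau_range gamma01 dom_xk Ms xnext_le mfxk mfxnext mgap.
have h_ge0 : (0 <= \int[P]_w (f (xk w) - f xstar)%:E)%E.
  by apply: integral_ge0 => w _; rewrite lee_fin subr_ge0 xstar_min.
(* For gamma = 0 the curvature term is 0 even when C_f^tau = +oo. *)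
have [gamma0|gamma_neq0] := eqVneq gamma 0.
  have curv0 (S : {set 'I_n}) : #|S| = tau -> 0 < gamma -> (curv_S blk f Mi S <= 0%:E)%E.
    by rewrite gamma0 ltxx.
  apply: le_trans (expected_le (fun=> 0) (fun _ _ => lexx 0) curv0) _.
  by rewrite gamma0 !mul0r expr0n /= !mul0r !mul0e !adde0.
have gamma_gt0 : 0 < gamma by rewrite lt0r gamma_neq0; case/andP: gamma01.
have [->|[c [curvE curv_tauE]]] := curv_tau_cases f Mi_supp tau dom_xstar.
  rewrite [X in (_ + X)%E]muleC gt0_mulye ?lte_fin; last first.
    by rewrite !mulr_gt0 ?invr_gt0 ?exprn_gt0 // ltr_wpDr.
  rewrite addey ?leey // -ltNye (lt_le_trans ltNy0) // mule_ge0 // lee_fin.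
  exact: contraction_factor_ge0.
apply: le_trans (expected_le c (fun S cS => proj1 (curvE S cS)) _) _.
  by move=> S cS _; rewrite (proj2 (curvE S cS)).
rewrite curv_tauE -addeA leeD2l //; rewrite curv_tauE in gap_bound.
apply: le_trans (leeD2r _ (lee_wpmul2l _ gap_bound)) _; first by rewrite lee_fin ltW.
rewrite -!EFinM -EFinD lee_fin.
suff -> : gamma * (delta * gamma / 2 * avgS tau c) + gamma ^+ 2 / 2 * avgS tau c
  = gamma ^+ 2 * (1 + delta) / 2 * avgS tau c by [].
by ring.
Qed.
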